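(* For every uncountable compact line $L$, the compact line $K=L^\omega$ (the set of all sequences in $L$) endowed with the lexicographic order is not separably determined.
   Context: A compact line is a totally ordered set which is compact in its order topology; $L^\omega$ with the lexicographic order is a compact line. For a compact line $H$, $H^+$ is the set of right-isolated points of $H$ ($\max H$ or points with an immediate successor in $H$). $\mathrm{NBV}(K)$ is the space of right-continuous real maps of bounded variation on $K$, identified with $C(K)^*$ via $F_\mu(t)=\mu([\min K,t])$. $\lim_{i\in I}a_i=0$ means $\{i:|a_i|\ge\varepsilon\}$ is finite for each $\varepsilon>0$; $c_0(I)$ is the space of such families. $(F_i)_{i\in I}$ in $\mathrm{NBV}(K)$ is weak*-null if $\lim_{i\in I}\int f\,d\mu_i=0$ for all $f\in C(K)$, $\mu_i$ associated to $F_i$. $(F_i)$ is of type $c_0\ell_1$ over $Q\subseteq K$ if $F_i(t)=a_{i,t}+b_{i,t}$ ($i\in I$, $t\in Q$) with $\lim_{i\in I}a_{i,t}=0$ for each $t\in Q$ and $\sup_i\sum_{t\in Q}|b_{i,t}|<\infty$. A compact line $K$ is separably determined if for every weak*-null family $(F_i)_{i\in I}$ in $\mathrm{NBV}(K)$ and every $Q\subseteq K$: whenever $\{t\in Q\cap(H\setminus H^+):(F_i(t))_{i\in I}\notin c_0(I)\}$ is countable for every closed separable $H\subseteq K$, the family is of type $c_0\ell_1$ over $Q$. *)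

From Stdlib Require Import Reals List.
Import ListNotations.
Open Scope R_scope.

Section LinearOrders.
Variable T : Type.
Variable lt : T -> T -> Prop.

Definition strict_linear_order : Prop :=
  (forall x, ~ lt x x) /\
  (forall x y z, lt x y -> lt y z -> lt x z) /\
  (forall x y, lt x y \/ x = y \/ lt y x).

(** membership in the interval (lo, hi), where None means unbounded;
    these are the basic open sets of the order topology *)
Definition in_int (lo hi : option T) (x : T) : Prop :=
  match lo with None => True | Some a => lt a x end /\
  match hi with None => True | Some b => lt x b end.

Definition order_open (U : T -> Prop) : Prop :=
  forall x, U x -> exists lo hi, in_int lo hi x /\ forall y, in_int lo hi y -> U y.

Definition order_closed (H : T -> Prop) : Prop :=
  order_open (fun x => ~ H x).

Definition order_compact : Prop :=
  forall (J : Type) (U : J -> T -> Prop),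
    (forall j, order_open (U j)) -> (forall x, exists j, U j x) ->
    exists s : list J, forall x, exists j, In j s /\ U j x.

Definition compact_line : Prop := strict_linear_order /\ order_compact.

Definition countable_set (A : T -> Prop) : Prop :=
  exists g : T -> nat, forall x y, A x -> A y -> g x = g y -> x = y.

Definition separable_set (H : T -> Prop) : Prop :=
  exists D : T -> Prop, (forall x, D x -> H x) /\ countable_set D /\
    forall x, H x -> forall lo hi, in_int lo hi x -> exists d, D d /\ in_int lo hi d.

Definition right_isolated (H : T -> Prop) (t : T) : Prop :=
  H t /\ ((forall s, H s -> ~ lt t s) \/
          exists s, H s /\ lt t s /\ ~ exists u, H u /\ lt t u /\ lt u s).

Definition continuous_fun (f : T -> R) : Prop :=
  forall x eps, 0 < eps -> exists lo hi, in_int lo hi x /\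
    forall y, in_int lo hi y -> Rabs (f y - f x) < eps.

Fixpoint incr (l : list T) : Prop :=
  match l with
  | x :: ((y :: _) as r) => lt x y /\ incr r
  | _ => True
  end.

Fixpoint var_sum (F : T -> R) (l : list T) : R :=
  match l with
  | x :: ((y :: _) as r) => Rabs (F y - F x) + var_sum F r
  | _ => 0
  end.

Definition right_continuous (F : T -> R) : Prop :=
  forall t eps, 0 < eps ->
    (forall s, ~ lt t s) \/
    exists u, lt t u /\ forall s, lt t s -> lt s u -> Rabs (F s - F t) < eps.

Definition bounded_variation (F : T -> R) : Prop :=
  exists M, forall l, incr l -> var_sum F l <= M.

Definition NBV (F : T -> R) : Prop := right_continuous F /\ bounded_variation F.

Definition partition (l : list T) : Prop :=
  incr l /\ match l with
            | [] => False
            | x :: _ => (forall y, ~ lt y x) /\ (forall y, ~ lt (last l x) y)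
            end.

Fixpoint rs_tail (F f : T -> R) (l : list T) : R :=
  match l with
  | x :: ((y :: _) as r) => f y * (F y - F x) + rs_tail F f r
  | _ => 0
  end.

(** Stieltjes sum: f(t_0) mu_F({t_0}) + sum_k f(t_k) mu_F((t_{k-1}, t_k]) *)
Definition rs_sum (F f : T -> R) (l : list T) : R :=
  match l with
  | [] => 0
  | x :: _ => f x * F x + rs_tail F f l
  end.

(** [stieltjes F f v]: v = \int f d mu_F, where mu_F is the measure associated
    with F (F(t) = mu_F([min K, t])); computed as the limit of the Stieltjes
    sums along the net of partitions directed by refinement. *)
Definition stieltjes (F f : T -> R) (v : R) : Prop :=
  forall eps, 0 < eps -> exists p0, partition p0 /\
    forall p, partition p -> (forall x, In x p0 -> In x p) ->
      Rabs (rs_sum F f p - v) < eps.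

End LinearOrders.

(** lim_{i in I} a_i = 0 : {i : |a_i| >= eps} finite for each eps > 0 *)
Definition c0lim {I : Type} (a : I -> R) : Prop :=
  forall eps, 0 < eps -> exists s : list I, forall i, eps <= Rabs (a i) -> In i s.

Definition weak_star_null {T : Type} (lt : T -> T -> Prop) {I : Type}
    (F : I -> T -> R) : Prop :=
  forall f, continuous_fun T lt f ->
    exists v : I -> R, (forall i, stieltjes T lt (F i) f (v i)) /\ c0lim v.

Definition type_c0l1 {T I : Type} (F : I -> T -> R) (Q : T -> Prop) : Prop :=
  exists (a b : I -> T -> R),
    (forall i t, Q t -> F i t = a i t + b i t) /\
    (forall t, Q t -> c0lim (fun i => a i t)) /\
    exists M, forall i (l : list T), NoDup l -> (forall t, In t l -> Q t) ->
      fold_right Rplus 0 (map (fun t => Rabs (b i t)) l) <= M.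

Definition separably_determined (T : Type) (lt : T -> T -> Prop) : Prop :=
  forall (I : Type) (F : I -> T -> R),
    (forall i, NBV T lt (F i)) -> weak_star_null lt F ->
    forall Q : T -> Prop,
      (forall H : T -> Prop, order_closed T lt H -> separable_set T lt H ->
         countable_set T (fun t => Q t /\ H t /\ ~ right_isolated T lt H t /\
                                   ~ c0lim (fun i => F i t))) ->
      type_c0l1 F Q.

Definition lex {L : Type} (lt : L -> L -> Prop) (x y : nat -> L) : Prop :=
  exists n, (forall m, (m < n)%nat -> x m = y m) /\ lt (x n) (y n).

Definition uncountable (L : Type) : Prop :=
  ~ exists g : L -> nat, forall x y, g x = g y -> x = y.

(* Let m, M be the least and greatest elements of L.  For a finite sequence s the
   sequences extending s form the closed interval [s m m ..., s M M ...] of K = L^omega,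
   and F_s, the indicator of the interval without its right end point, is the distribution
   function of the difference of the Dirac measures at the two end points.  A continuous f
   differs by at least eps between the end points of only finitely many such cylinders, so
   (F_s) is weak*-null.

   Well-order L and let W be the uncountable set of elements other than m, M with countably
   many predecessors; for a in W let q_a in K enumerate the predecessors of a, and let
   Q = {q_a}.  If H is closed and separable and q_a lies in H \ H^+, then every finite
   prefix of q_a is a prefix of a point of a fixed countable dense subset of H; the
   countably many coordinates of those points are bounded in W, hence so is a, and Q meets
   H \ H^+ in a countable set.  On the other hand, closing off along W shows that for every
   h : Q -> nat and every N some cylinder s contains N points t of Q with h t <= |s|.
   Taking h t larger than the lengths of the finitely many s with |a_(s,t)| >= 1/2 gives
   F_s(t) = 1 and |b_(s,t)| >= 1/2 at these N points, so (F_s) is not of type c0-l1 over Q. *)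

From Stdlib Require Import Reals List Lia Lra Cantor.
From Stdlib Require Import Classical ClassicalEpsilon FunctionalExtensionality.
From mathcomp Require boolp wochoice.
Import ListNotations.

(** * Linear orders and the order topology *)

Definition upper_bound {T : Type} (lt : T -> T -> Prop) (A : T -> Prop) (c : T) : Prop :=
  forall x, A x -> ~ lt c x.

Definition is_sup {T : Type} (lt : T -> T -> Prop) (A : T -> Prop) (c : T) : Prop :=
  upper_bound lt A c /\ forall u, upper_bound lt A u -> ~ lt u c.

Definition complete {T : Type} (lt : T -> T -> Prop) : Prop :=
  forall A : T -> Prop, exists c, is_sup lt A c.

Section StrictLinearOrder.
Context {T : Type} {lt : T -> T -> Prop} (slo : strict_linear_order T lt).

Lemma slo_irrefl x : ~ lt x x. Proof. apply slo. Qed.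
Lemma slo_trans x y z : lt x y -> lt y z -> lt x z. Proof. apply slo. Qed.
Lemma slo_total x y : lt x y \/ x = y \/ lt y x. Proof. apply slo. Qed.

Lemma slo_asym x y : lt x y -> ~ lt y x.
Proof. intros Hxy Hyx. exact (slo_irrefl x (slo_trans _ _ _ Hxy Hyx)). Qed.

Lemma slo_antisym x y : ~ lt x y -> ~ lt y x -> x = y.
Proof. intros H1 H2. destruct (slo_total x y) as [?|[?|?]]; tauto. Qed.

Lemma slo_le_lt x y z : ~ lt y x -> lt y z -> lt x z.
Proof.
  intros Hyx Hyz. destruct (slo_total x y) as [Hxy|[->|Hyx']]; [|exact Hyz|tauto].
  exact (slo_trans _ _ _ Hxy Hyz).
Qed.

Lemma slo_lt_le x y z : lt x y -> ~ lt z y -> lt x z.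
Proof.
  intros Hxy Hzy. destruct (slo_total y z) as [Hyz|[<-|Hzy']]; [|exact Hxy|tauto].
  exact (slo_trans _ _ _ Hxy Hyz).
Qed.

Lemma slo_le_trans x y z : ~ lt y x -> ~ lt z y -> ~ lt z x.
Proof. intros Hyx Hzy Hzx. exact (Hzy (slo_lt_le _ _ _ Hzx Hyx)). Qed.

Lemma uncountable_min_lt_max (m M : T) : uncountable T ->
  (forall x, ~ lt x m) -> (forall x, ~ lt M x) -> lt m M.
Proof.
  intros Hunc Hm HM. destruct (slo_total m M) as [H|[Heq|H]]; [exact H| |exfalso; exact (HM _ H)].
  exfalso. subst M. apply Hunc. exists (fun _ => 0%nat). intros x y _.
  rewrite (slo_antisym x m (Hm x) (HM x)), (slo_antisym y m (Hm y) (HM y)). reflexivity.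
Qed.

Lemma slo_flip : strict_linear_order T (fun x y => lt y x).
Proof.
  split; [exact slo_irrefl|split].
  - intros x y z Hyx Hzy. exact (slo_trans _ _ _ Hzy Hyx).
  - intros x y. destruct (slo_total x y) as [?|[?|?]]; auto.
Qed.

Lemma exists_list_max (P : T -> Prop) (l : list T) : (exists x, In x l /\ P x) ->
  exists p, In p l /\ P p /\ forall y, In y l -> P y -> ~ lt p y.
Proof.
  induction l as [|a l IH]; intros [x [Hx Px]]; [destruct Hx|].
  destruct (classic (exists x, In x l /\ P x)) as [Hl|Hl].
  - destruct (IH Hl) as [p [Hp [Pp Hmax]]].
    destruct (classic (P a /\ lt p a)) as [[Pa Hpa]|Ha].
    + exists a. split; [left; reflexivity|split; [exact Pa|]].
      intros y [<-|Hy] Py Hay; [exact (slo_irrefl _ Hay)|].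
      exact (Hmax y Hy Py (slo_trans _ _ _ Hpa Hay)).
    + exists p. split; [right; exact Hp|split; [exact Pp|]].
      intros y [<-|Hy] Py; [tauto|exact (Hmax y Hy Py)].
  - destruct Hx as [->|Hx]; [|exfalso; eauto].
    exists x. split; [left; reflexivity|split; [exact Px|]].
    intros y [<-|Hy] Py; [apply slo_irrefl|exfalso; eauto].
Qed.

End StrictLinearOrder.

Section CompleteLinearOrder.
Context {T : Type} {lt : T -> T -> Prop} (slo : strict_linear_order T lt).

Lemma exists_list_min (P : T -> Prop) (l : list T) : (exists x, In x l /\ P x) ->
  exists p, In p l /\ P p /\ forall y, In y l -> P y -> ~ lt y p.
Proof. exact (exists_list_max (slo_flip slo) P l). Qed.

Lemma compact_complete (t0 : T) : order_compact T lt -> complete lt.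
Proof.
  intros Hcomp A. apply NNPP; intros Hnosup.
  set (U := fun (j : T + T) x => match j with
             | inl s => A s /\ lt x s
             | inr u => upper_bound lt A u /\ lt u x end).
  destruct (Hcomp (T + T)%type U) as [js Hjs].
  - intros [s|u] x Hx; simpl in Hx.
    + exists None, (Some s). split; [split; simpl; tauto|]. intros y [_ Hy]; simpl; tauto.
    + exists (Some u), None. split; [split; simpl; tauto|]. intros y [Hy _]; simpl; tauto.
  - intros x. destruct (classic (exists s, A s /\ lt x s)) as [[s Hs]|Hx].
    { exists (inl s); exact Hs. }
    assert (Hub : upper_bound lt A x) by (intros s As Hs; apply Hx; eauto).
    destruct (classic (exists u, upper_bound lt A u /\ lt u x)) as [[u Hu]|Hleast].
    { exists (inr u); exact Hu. }
    exfalso; apply Hnosup; exists x; split; [exact Hub|].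
    intros u Hu Hux; apply Hleast; eauto.
  - set (pt := fun j : T + T => match j with inl s => s | inr u => u end).
    assert (Hleft : ~ exists s, In (inl s) js /\ A s).
    { intros [s [Hs As]].
      destruct (exists_list_max slo (fun x => In (inl x) js /\ A x) (map pt js))
        as [p [_ [[Hp Ap] Hmax]]].
      { exists s. split; [exact (in_map pt _ _ Hs)|auto]. }
      destruct (Hjs p) as [[s'|u] [Hin Hu]]; simpl in Hu.
      - exact (Hmax s' (in_map pt _ _ Hin) (conj Hin (proj1 Hu)) (proj2 Hu)).
      - exact (proj1 Hu p Ap (proj2 Hu)). }
    assert (Hright : ~ exists u, In (inr u) js /\ upper_bound lt A u).
    { intros [u [Hu Bu]].
      destruct (exists_list_min (fun x => In (inr x) js /\ upper_bound lt A x) (map pt js))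
        as [p [_ [[Hp Bp] Hmin]]].
      { exists u. split; [exact (in_map pt _ _ Hu)|auto]. }
      destruct (Hjs p) as [[s|u'] [Hin Hs]]; simpl in Hs.
      - apply Hleft. exists s. tauto.
      - exact (Hmin u' (in_map pt _ _ Hin) (conj Hin (proj1 Hs)) (proj2 Hs)). }
    destruct (Hjs t0) as [[s|u] [Hin Hu]]; simpl in Hu.
    + apply Hleft. exists s. tauto.
    + apply Hright. exists u. tauto.
Qed.

Lemma complete_compact : complete lt -> order_compact T lt.
Proof.
  intros Hsup J U Hopen Hcover.
  set (S := fun x => exists js : list J, forall y, ~ lt x y -> exists j, In j js /\ U j y).
  destruct (Hsup S) as [c [Hub Hleast]].
  destruct (Hcover c) as [j Hj]. destruct (Hopen j c Hj) as [lo [hi [Hin Hsub]]].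
  assert (Hbelow : exists js, forall y, match hi with None => True | Some h => lt y h end ->
                     exists j', In j' js /\ U j' y).
  { destruct lo as [l|].
    - assert (Hx : exists x, S x /\ lt l x).
      { apply NNPP; intros Hno. apply (Hleast l); [|exact (proj1 Hin)].
        intros x Sx Hlx. apply Hno; eauto. }
      destruct Hx as [x [[js Hjs] Hlx]].
      exists (j :: js). intros y Hy.
      destruct (classic (lt x y)) as [Hxy|Hxy].
      + exists j. split; [left; reflexivity|]. apply Hsub.
        split; [exact (slo_trans slo _ _ _ Hlx Hxy)|exact Hy].
      + destruct (Hjs y Hxy) as [j' [Hj' HU]]. exists j'. split; [right|]; assumption.
    - exists [j]. intros y Hy. exists j. split; [left; reflexivity|].
      apply Hsub. split; [exact I|exact Hy]. }
  destruct Hbelow as [js Hjs].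
  destruct hi as [h|].
  - exfalso. destruct (Hcover h) as [jh Hjh].
    apply (Hub h); [|exact (proj2 Hin)].
    exists (jh :: js). intros y Hy. destruct (slo_total slo y h) as [Hyh|[->|Hhy]].
    + destruct (Hjs y Hyh) as [j' [Hj' HU]]. exists j'. split; [right|]; assumption.
    + exists jh. split; [left; reflexivity|exact Hjh].
    + contradiction.
  - exists js. intros x. exact (Hjs x I).
Qed.

Lemma closed_has_min : complete lt -> forall C, order_closed T lt C -> (exists x, C x) ->
  exists p, C p /\ forall y, C y -> ~ lt y p.
Proof.
  intros Hsup C HC [x0 Cx0].
  set (lower := fun x => forall y, C y -> ~ lt y x).
  destruct (Hsup lower) as [c [Hub Hleast]].
  assert (Hc : lower c).
  { intros y Cy. apply Hleast. intros x Hx. exact (Hx y Cy). }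
  exists c. split; [|exact Hc].
  apply NNPP; intros Nc. destruct (HC c Nc) as [lo [hi [Hin Hsub]]].
  assert (Hlo : forall y, C y -> match lo with None => True | Some l => lt l y end).
  { intros y Cy. destruct lo as [l|]; [|exact I].
    exact (slo_lt_le slo _ _ _ (proj1 Hin) (Hc y Cy)). }
  destruct hi as [h|].
  - apply (Hub h); [|exact (proj2 Hin)].
    intros y Cy Hyh. exact (Hsub y (conj (Hlo y Cy) Hyh) Cy).
  - exact (Hsub x0 (conj (Hlo x0 Cx0) I) Cx0).
Qed.

Lemma not_right_isolated_approach (H : T -> Prop) t b : complete lt -> order_closed T lt H ->
  H t -> ~ right_isolated T lt H t -> lt t b -> exists u, H u /\ lt t u /\ lt u b.
Proof.
  intros Hsup HC Ht Hni Htb.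
  assert (Hnmax : exists s, H s /\ lt t s).
  { apply NNPP. intros Hno. apply Hni. split; [exact Ht|]. left. intros s Hs Hts. eauto. }
  assert (Hnsucc : forall s, H s -> lt t s -> exists u, H u /\ lt t u /\ lt u s).
  { intros s Hs Hts. apply NNPP. intros Hno. apply Hni. split; [exact Ht|]. right. eauto. }
  destruct (classic (exists s, H s /\ lt t s /\ ~ lt b s)) as [[s [Hs [Hts Hsb]]]|Hfar].
  { destruct (Hnsucc s Hs Hts) as [u [Hu [Htu Hus]]].
    exists u. split; [exact Hu|split; [exact Htu|exact (slo_lt_le slo _ _ _ Hus Hsb)]]. }
  assert (Hbeyond : forall u, H u -> lt t u -> ~ lt u b).
  { intros u Hu Htu Hub. apply Hfar. exists u. split; [exact Hu|split; [exact Htu|]].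
    exact (slo_asym slo _ _ Hub). }
  exfalso.
  destruct (closed_has_min Hsup (fun x => H x /\ ~ lt x b)) as [p [[Hp Hpb] Hpmin]].
  - intros x Hx. destruct (classic (lt x b)) as [Hxb|Hxb].
    + exists None, (Some b). split; [split; [exact I|exact Hxb]|].
      intros y [_ Hyb] [_ Hyb']. exact (Hyb' Hyb).
    + assert (HnH : ~ H x) by tauto.
      destruct (HC x HnH) as [lo [hi [Hin Hsub]]]. exists lo, hi. split; [exact Hin|].
      intros y Hy [HHy _]. exact (Hsub y Hy HHy).
  - destruct Hnmax as [s [Hs Hts]]. exists s. split; [exact Hs|exact (Hbeyond s Hs Hts)].
  - apply Hni. split; [exact Ht|]. right. exists p. split; [exact Hp|split].
    + exact (slo_lt_le slo _ _ _ Htb Hpb).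
    + intros [u [Hu [Htu Hup]]]. exact (Hpmin u (conj Hu (Hbeyond u Hu Htu)) Hup).
Qed.

End CompleteLinearOrder.

(** * Enumerable sets *)

Definition enumerable {X : Type} (A : X -> Prop) : Prop :=
  exists f : nat -> X, forall x, A x -> exists k, f k = x.

Lemma enumerable_sub {X : Type} (A B : X -> Prop) :
  (forall x, B x -> A x) -> enumerable A -> enumerable B.
Proof. intros HBA [f Hf]. exists f. intros x Bx. exact (Hf x (HBA x Bx)). Qed.

Lemma enumerable_image {X Y : Type} (A : X -> Prop) (g : X -> Y) :
  enumerable A -> enumerable (fun y => exists x, A x /\ y = g x).
Proof.
  intros [f Hf]. exists (fun k => g (f k)). intros y [x [Ax ->]].
  destruct (Hf x Ax) as [k <-]. exists k. reflexivity.
Qed.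

Lemma enumerable_range {X : Type} (f : nat -> X) : enumerable (fun x => exists k, f k = x).
Proof. exists f. tauto. Qed.

Lemma enumerable_eq {X : Type} (a : X) : enumerable (fun x => x = a).
Proof. exists (fun _ => a). intros x ->. exists 0%nat. reflexivity. Qed.

Lemma enumerable_in_list {X : Type} (x0 : X) (l : list X) : enumerable (fun x => In x l).
Proof.
  exists (fun k => nth k l x0). intros x Hx.
  destruct (In_nth l x x0 Hx) as [k [_ Hk]]. eauto.
Qed.

Lemma enumerable_union {X : Type} (A B : X -> Prop) :
  enumerable A -> enumerable B -> enumerable (fun x => A x \/ B x).
Proof.
  intros [fA HA] [fB HB].
  exists (fun k => let (i, j) := of_nat k in match i with O => fA j | S _ => fB j end).
  intros x [Ax|Bx].
  - destruct (HA x Ax) as [j Hj]. exists (to_nat (0, j)%nat). rewrite cancel_of_to. exact Hj.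
  - destruct (HB x Bx) as [j Hj]. exists (to_nat (1, j)%nat). rewrite cancel_of_to. exact Hj.
Qed.

Lemma enumerable_prod {X Y : Type} (A : X -> Prop) (B : Y -> Prop) :
  enumerable A -> enumerable B -> enumerable (fun p : X * Y => A (fst p) /\ B (snd p)).
Proof.
  intros [fA HA] [fB HB].
  exists (fun k => let (i, j) := of_nat k in (fA i, fB j)).
  intros [x y] [Ax By]. destruct (HA x Ax) as [i <-], (HB y By) as [j <-].
  exists (to_nat (i, j)). rewrite cancel_of_to. reflexivity.
Qed.

Lemma enumerable_bigunion {X Y : Type} (x0 : X) (P : Y -> Prop) (A : Y -> X -> Prop) :
  enumerable P -> (forall i, P i -> enumerable (A i)) ->
  enumerable (fun x => exists i, P i /\ A i x).
Proof.
  intros [fP HP] HA.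
  destruct (choice (fun i (g : nat -> X) => P i -> forall x, A i x -> exists k, g k = x))
    as [g Hg].
  { intros i. destruct (classic (P i)) as [Pi|Pi].
    - destruct (HA i Pi) as [g Hg]. exists g. auto.
    - exists (fun _ => x0). tauto. }
  exists (fun k => let (i, j) := of_nat k in g (fP i) j).
  intros x [i [Pi Ax]]. destruct (HP i Pi) as [a <-]. destruct (Hg _ Pi x Ax) as [b Hb].
  exists (to_nat (a, b)). rewrite cancel_of_to. exact Hb.
Qed.

Lemma enumerable_lists {X : Type} (C : X -> Prop) :
  enumerable C -> enumerable (fun l : list X => forall x, In x l -> C x).
Proof.
  intros HC.
  assert (Hlen : forall n, enumerable (fun l : list X => length l = n /\ forall x, In x l -> C x)).
  { induction n as [|n IH].
    - apply (enumerable_sub (fun l => l = [])); [|apply enumerable_eq].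
      intros [|x l] [Hl _]; [reflexivity|discriminate].
    - apply (enumerable_sub (fun l => exists p, (C (fst p) /\ (length (snd p) = n /\
               forall x, In x (snd p) -> C x)) /\ l = fst p :: snd p));
        [|apply enumerable_image;
          exact (enumerable_prod C (fun l => length l = n /\ forall x, In x l -> C x) HC IH)].
      intros [|x l] [Hl HCl]; [discriminate|].
      exists (x, l). simpl in *. split; [|reflexivity].
      split; [apply HCl; left; reflexivity|].
      split; [lia|intros y Hy; apply HCl; right; exact Hy]. }
  apply (enumerable_sub (fun l => exists n, True /\ (length l = n /\ forall x, In x l -> C x))).
  - intros l Hl. exists (length l). auto.
  - apply (enumerable_bigunion []); [|intros n _; apply Hlen].
    apply (enumerable_sub (fun n => exists k, k = n)); [eauto|apply enumerable_range].
Qed.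

Lemma countable_enumerable {X : Type} (x0 : X) (A : X -> Prop) : countable_set X A -> enumerable A.
Proof.
  intros [g Hg]. exists (fun k => epsilon (inhabits x0) (fun y => A y /\ g y = k)).
  intros x Ax. exists (g x).
  assert (Hex : exists y, A y /\ g y = g x) by eauto.
  destruct (epsilon_spec (inhabits x0) _ Hex) as [Ay Hgy]. exact (Hg _ _ Ay Ax Hgy).
Qed.

Lemma enumerable_countable {X : Type} (A : X -> Prop) : enumerable A -> countable_set X A.
Proof.
  intros [f Hf]. exists (fun x => epsilon (inhabits 0%nat) (fun k => f k = x)).
  intros x y Ax Ay Hxy.
  pose proof (epsilon_spec (inhabits 0%nat) (fun k => f k = x) (Hf x Ax)) as Ex.
  pose proof (epsilon_spec (inhabits 0%nat) (fun k => f k = y) (Hf y Ay)) as Ey.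
  simpl in Ex, Ey. rewrite Hxy in Ex. congruence.
Qed.

Lemma finite_or_many {X : Type} (A : X -> Prop) (N : nat) :
  (exists l, NoDup l /\ length l = N /\ forall x, In x l -> A x) \/
  (exists l, forall x, A x -> In x l).
Proof.
  induction N as [|N [[l [Hnd [Hlen HA]]]|Hfin]].
  - left. exists []. split; [constructor|split; [reflexivity|intros x []]].
  - destruct (classic (exists x, A x /\ ~ In x l)) as [[x [Ax Hx]]|Hall].
    + left. exists (x :: l). split; [constructor; assumption|split; [simpl; lia|]].
      intros y [<-|Hy]; auto.
    + right. exists l. intros x Ax. apply NNPP; intros Hx. apply Hall; eauto.
  - right; exact Hfin.
Qed.

(** * Lexicographic powers *)

Section LexicographicPower.
Context {L : Type} {ltL : L -> L -> Prop} (sloL : strict_linear_order L ltL).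
Local Open Scope nat_scope.

Definition agree (n : nat) (x y : nat -> L) : Prop := forall i, i < n -> x i = y i.

Lemma agree_sym n x y : agree n x y -> agree n y x.
Proof. intros H i Hi. symmetry. exact (H i Hi). Qed.

Lemma agree_le n k x y : k <= n -> agree n x y -> agree k x y.
Proof. intros Hk H i Hi. apply H. lia. Qed.

Lemma exists_first_difference (x y : nat -> L) : x <> y -> exists n, agree n x y /\ x n <> y n.
Proof.
  intros Hne. apply NNPP; intros Hno. apply Hne.
  assert (Hall : forall n, agree n x y).
  { induction n as [|n IH]; intros i Hi; [lia|].
    destruct (Nat.eq_dec i n) as [->|Hin]; [|apply IH; lia].
    apply NNPP; intros Hxy. apply Hno; eauto. }
  extensionality i. apply (Hall (S i)). lia.
Qed.

Lemma lex_strict_linear_order : strict_linear_order (nat -> L) (lex ltL).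
Proof.
  split; [|split].
  - intros x [n [_ H]]. exact (slo_irrefl sloL _ H).
  - intros x y z [n1 [A1 H1]] [n2 [A2 H2]].
    assert (Hxz : agree (Nat.min n1 n2) x z).
    { intros i Hi. rewrite A1 by lia. apply A2. lia. }
    destruct (Nat.lt_total n1 n2) as [Hlt|[<-|Hlt]].
    + exists n1. rewrite Nat.min_l in Hxz by lia. split; [exact Hxz|].
      rewrite <- (A2 n1 Hlt). exact H1.
    + exists n1. rewrite Nat.min_id in Hxz. split; [exact Hxz|].
      exact (slo_trans sloL _ _ _ H1 H2).
    + exists n2. rewrite Nat.min_r in Hxz by lia. split; [exact Hxz|].
      rewrite (A1 n2 Hlt). exact H2.
  - intros x y. destruct (classic (x = y)) as [->|Hne]; [auto|].
    destruct (exists_first_difference x y Hne) as [n [Hn Hxy]].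
    destruct (slo_total sloL (x n) (y n)) as [H|[H|H]]; [left|tauto|right; right].
    + exists n. auto.
    + exists n. split; [apply agree_sym|]; assumption.
Qed.

Lemma agree_between n (x y z : nat -> L) :
  ~ lex ltL y x -> ~ lex ltL z y -> agree n x z -> agree n x y.
Proof.
  intros Hyx Hzy Hxz. apply agree_sym.
  induction n as [|n IH]; intros i Hi; [lia|].
  assert (Hyx' : agree n y x) by (apply IH; apply (agree_le (S n)); [lia|exact Hxz]).
  destruct (Nat.eq_dec i n) as [->|Hin]; [|apply Hyx'; lia].
  destruct (slo_total sloL (y n) (x n)) as [H|[H|H]]; [|exact H|].
  - exfalso. apply Hyx. exists n. auto.
  - exfalso. apply Hzy. exists n. rewrite <- (Hxz n) by lia. split; [|exact H].
    intros j Hj. rewrite <- (Hxz j) by lia. symmetry. apply Hyx'. exact Hj.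
Qed.

Lemma lex_agree_right (x y : nat -> L) :
  lex ltL x y -> exists N, forall t, agree N t y -> lex ltL x t.
Proof.
  intros [n [Hn Hxy]]. exists (S n). intros t Ht. exists n. split.
  - intros i Hi. rewrite Hn by exact Hi. symmetry. apply Ht. lia.
  - rewrite (Ht n) by lia. exact Hxy.
Qed.

Lemma lex_agree_left (x y : nat -> L) :
  lex ltL x y -> exists N, forall t, agree N t x -> lex ltL t y.
Proof.
  intros [n [Hn Hxy]]. exists (S n). intros t Ht. exists n. split.
  - intros i Hi. rewrite <- Hn by exact Hi. apply Ht. lia.
  - rewrite (Ht n) by lia. exact Hxy.
Qed.

Lemma in_int_agree lo hi (h : nat -> L) : in_int (nat -> L) (lex ltL) lo hi h ->
  exists N, forall t, agree N t h -> in_int (nat -> L) (lex ltL) lo hi t.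
Proof.
  intros [Hlo Hhi].
  assert (E1 : exists N, forall t, agree N t h ->
                 match lo with None => True | Some a => lex ltL a t end).
  { destruct lo as [a|]; [exact (lex_agree_right a h Hlo)|exists 0; auto]. }
  assert (E2 : exists N, forall t, agree N t h ->
                 match hi with None => True | Some b => lex ltL t b end).
  { destruct hi as [b|]; [exact (lex_agree_left h b Hhi)|exists 0; auto]. }
  destruct E1 as [N1 E1], E2 as [N2 E2]. exists (N1 + N2). intros t Ht. split.
  - apply E1. apply (agree_le (N1 + N2)); [lia|exact Ht].
  - apply E2. apply (agree_le (N1 + N2)); [lia|exact Ht].
Qed.

Section Supremum.
Variables (sup : (L -> Prop) -> L) (d0 : L).
Hypothesis sup_spec : forall A, is_sup ltL A (sup A).
Variable A : (nat -> L) -> Prop.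

Definition list_seq (l : list L) : nat -> L := fun i => nth i l d0.

(* Coordinate n of the supremum is the supremum of the n-th coordinates of the elements of
   A that agree with it below n; the prefix is carried as a list to make the recursion
   structural. *)
Definition next_coord_sup (l : list L) : L :=
  sup (fun y => exists x, A x /\ agree (length l) x (list_seq l) /\ x (length l) = y).

Fixpoint sup_prefix (n : nat) : list L :=
  match n with O => [] | S n => sup_prefix n ++ [next_coord_sup (sup_prefix n)] end.

Definition lex_sup (i : nat) : L := nth i (sup_prefix (S i)) d0.

Lemma length_sup_prefix n : length (sup_prefix n) = n.
Proof. induction n as [|n IH]; simpl; [reflexivity|]. rewrite length_app, IH. simpl. lia. Qed.

Lemma nth_sup_prefix n i : i < n -> nth i (sup_prefix n) d0 = lex_sup i.
Proof.
  induction n as [|n IH]; intros Hi; [lia|].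
  destruct (Nat.eq_dec i n) as [->|Hin]; [reflexivity|].
  simpl. rewrite app_nth1 by (rewrite length_sup_prefix; lia). apply IH. lia.
Qed.

Lemma lex_sup_next n : lex_sup n = next_coord_sup (sup_prefix n).
Proof.
  unfold lex_sup. simpl. rewrite app_nth2 by (rewrite length_sup_prefix; lia).
  rewrite length_sup_prefix, Nat.sub_diag. reflexivity.
Qed.

Lemma agree_sup_prefix n x : agree n x (list_seq (sup_prefix n)) <-> agree n x lex_sup.
Proof.
  unfold list_seq. split; intros H i Hi; rewrite H by exact Hi.
  - apply nth_sup_prefix. exact Hi.
  - symmetry. apply nth_sup_prefix. exact Hi.
Qed.

Lemma lex_sup_is_sup : is_sup (lex ltL) A lex_sup.
Proof.
  set (slice := fun n y => exists x, A x /\ agree n x (list_seq (sup_prefix n)) /\ x n = y).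
  assert (HS : forall n, is_sup ltL (slice n) (lex_sup n)).
  { intros n. rewrite lex_sup_next. unfold next_coord_sup, slice.
    rewrite length_sup_prefix. apply sup_spec. }
  split.
  - intros x Ax [n [Hn Hlt]].
    apply (proj1 (HS n) (x n)); [|exact Hlt].
    exists x. split; [exact Ax|split; [|reflexivity]].
    apply agree_sup_prefix. apply agree_sym. exact Hn.
  - intros u Hu [n [Hn Hlt]].
    destruct (classic (upper_bound ltL (slice n) (u n))) as [Hub|Hnub].
    + exact (proj2 (HS n) _ Hub Hlt).
    + assert (exists y, slice n y /\ ltL (u n) y) as [y [[x [Ax [Hx <-]]] Hy]].
      { apply NNPP; intros Hno. apply Hnub. intros y Sy Hy. apply Hno; eauto. }
      apply (Hu x Ax). exists n. split; [|exact Hy].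
      apply agree_sup_prefix in Hx. intros i Hi. rewrite Hn by exact Hi.
      symmetry. exact (Hx i Hi).
Qed.

End Supremum.

Lemma lex_complete : complete ltL -> complete (lex ltL).
Proof.
  intros Hc A. destruct (choice (fun B c => is_sup ltL B c) Hc) as [sup Hsup].
  exists (lex_sup sup (sup (fun _ => False)) A). apply lex_sup_is_sup. exact Hsup.
Qed.

End LexicographicPower.

(** * Well orders with countable initial segments *)

Section WellOrderingPrinciple.
Import eqtype boolp.

Lemma exists_unique_minima (T : Type) : exists R : T -> T -> bool,
  forall P : T -> Prop, (exists x, P x) ->
    exists z, P z /\ (forall x, P x -> R z x = true) /\
      forall z', P z' -> (forall x, P x -> R z' x = true) -> z' = z.
Proof.
  destruct (wochoice.well_ordering_principle (classicType T)) as [R HR].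
  exists R. intros P [x Px].
  destruct (HR (fun y => asbool (P y))) as [z [[Pz Hz] Huniq]].
  { exists x. apply asboolT. exact Px. }
  exists z. split; [exact (@asboolW (P z) Pz)|split].
  - intros y Py. apply Hz. apply asboolT. exact Py.
  - intros z' Pz' Hz'. symmetry. apply Huniq. split; [apply asboolT; exact Pz'|].
    intros y Hy. apply Hz'. exact (@asboolW (P y) Hy).
Qed.

End WellOrderingPrinciple.

Lemma exists_well_order (T : Type) : exists wlt : T -> T -> Prop,
  strict_linear_order T wlt /\
  forall P : T -> Prop, (exists x, P x) -> exists z, P z /\ forall x, P x -> ~ wlt x z.
Proof.
  destruct (exists_unique_minima T) as [R Hmin].
  assert (Htotal : forall x y, R x y = true \/ R y x = true).
  { intros x y. destruct (Hmin (fun z => z = x \/ z = y)) as [z [[->| ->] [Hz _]]]; eauto. }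
  assert (Hanti : forall x y, R x y = true -> R y x = true -> x = y).
  { intros x y Hxy Hyx.
    destruct (Hmin (fun z => z = x \/ z = y)) as [z [_ [_ Huniq]]]; [eauto|].
    assert (Hrefl : forall w, R w w = true) by (intros w; destruct (Htotal w w); assumption).
    rewrite (Huniq x), (Huniq y); auto; intros w [-> | ->]; auto. }
  assert (Htrans : forall x y z, R x y = true -> R y z = true -> R x z = true).
  { intros x y z Hxy Hyz.
    destruct (Hmin (fun w => w = x \/ w = y \/ w = z)) as [w [Hw [Hmw _]]]; [eauto|].
    destruct Hw as [-> | [-> | ->]].
    - apply Hmw. auto.
    - rewrite (Hanti x y Hxy (Hmw x (or_introl eq_refl))). exact Hyz.
    - rewrite <- (Hanti y z Hyz (Hmw y (or_intror (or_introl eq_refl)))). exact Hxy. }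
  exists (fun x y => R x y = true /\ x <> y). split; [split; [|split]|].
  - intros x [_ Hx]. exact (Hx eq_refl).
  - intros x y z [Hxy Nxy] [Hyz Nyz]. split; [eauto|].
    intros ->. apply Nyz. exact (Hanti _ _ Hyz Hxy).
  - intros x y. destruct (classic (x = y)) as [->|Hne]; [auto|].
    destruct (Htotal x y); [left|right; right]; split; auto.
  - intros P HP. destruct (Hmin P HP) as [z [Pz [Hz _]]]. exists z. split; [exact Pz|].
    intros x Px [Hxz Nxz]. exact (Nxz (Hanti _ _ Hxz (Hz x Px))).
Qed.

Lemma uncountable_inhabited {X : Type} : uncountable X -> inhabited X.
Proof.
  intros Hunc. apply NNPP. intros Hempty. apply Hunc.
  exists (fun _ => 0%nat). intros x. exfalso. exact (Hempty (inhabits x)).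
Qed.

Definition countable_below {L : Type} (wlt : L -> L -> Prop) (a : L) : Prop :=
  enumerable (fun y => wlt y a).

Definition omega1 {L : Type} (wlt : L -> L -> Prop) (E : L -> Prop) (a : L) : Prop :=
  countable_below wlt a /\ ~ E a.

Section CountablyManyPredecessors.
Context {L : Type} {wlt : L -> L -> Prop} (wslo : strict_linear_order L wlt).
Hypothesis wlt_wf :
  forall P : L -> Prop, (exists x, P x) -> exists z, P z /\ forall x, P x -> ~ wlt x z.
Hypothesis L_uncountable : uncountable L.
Variable E : L -> Prop.
Hypothesis E_enumerable : enumerable E.
Local Open Scope nat_scope.

Lemma countable_below_lt a b : countable_below wlt a -> wlt b a -> countable_below wlt b.
Proof.
  intros Ha Hba. apply (enumerable_sub _ _ (fun y Hy => slo_trans wslo _ _ _ Hy Hba) Ha).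
Qed.

Lemma not_enumerable_countable_below : ~ enumerable (countable_below wlt).
Proof.
  intros Hc. destruct (classic (exists y, ~ countable_below wlt y)) as [Hy|Hall].
  - destruct (wlt_wf _ Hy) as [y0 [Hy0 Hmin]]. apply Hy0.
    apply (enumerable_sub (countable_below wlt)); [|exact Hc].
    intros x Hx. apply NNPP. intros Hnx. exact (Hmin x Hnx Hx).
  - apply L_uncountable.
    destruct (enumerable_countable (fun _ : L => True)) as [g Hg].
    { apply (enumerable_sub (countable_below wlt)); [|exact Hc].
      intros x _. apply NNPP. intros Hx. apply Hall. eauto. }
    exists g. intros x y. apply Hg; exact I.
Qed.

Lemma not_enumerable_omega1 : ~ enumerable (omega1 wlt E).
Proof.
  intros Hw. apply not_enumerable_countable_below.
  apply (enumerable_sub (fun x => omega1 wlt E x \/ E x)); [|apply enumerable_union; assumption].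
  intros x Hx. destruct (classic (E x)); unfold omega1; tauto.
Qed.

Lemma omega1_bounded (A : L -> Prop) : enumerable A -> (forall x, A x -> countable_below wlt x) ->
  exists b, omega1 wlt E b /\ forall x, A x -> wlt x b.
Proof.
  intros HA Hbelow. destruct (uncountable_inhabited L_uncountable) as [x0].
  set (U := fun y => exists x, A x /\ (wlt y x \/ y = x)).
  assert (HU : enumerable U).
  { apply (enumerable_bigunion x0 A (fun x y => wlt y x \/ y = x) HA).
    intros x Ax. apply enumerable_union; [exact (Hbelow x Ax)|apply enumerable_eq]. }
  destruct (classic (exists b, omega1 wlt E b /\ ~ U b)) as [[b [Hb HUb]]|Hno].
  - exists b. split; [exact Hb|]. intros x Ax.
    destruct (slo_total wslo x b) as [Hxb|[Hxb|Hbx]]; [exact Hxb|exfalso; apply HUb..].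
    + exists x. auto.
    + exists x. auto.
  - exfalso. apply not_enumerable_omega1. apply (enumerable_sub U); [|exact HU].
    intros x Hx. apply NNPP. intros HUx. apply Hno. eauto.
Qed.

Lemma omega1_chain (Phi : L -> L -> Prop) :
  (forall b, omega1 wlt E b -> enumerable (Phi b)) ->
  (forall b a, Phi b a -> countable_below wlt a) ->
  exists chain : nat -> L, (forall n, omega1 wlt E (chain n)) /\
    forall n, wlt (chain n) (chain (S n)) /\ forall a, Phi (chain n) a -> wlt a (chain (S n)).
Proof.
  intros HPhi Hbelow.
  assert (Hnext : forall b, exists b', omega1 wlt E b ->
            omega1 wlt E b' /\ wlt b b' /\ forall a, Phi b a -> wlt a b').
  { intros b. destruct (classic (omega1 wlt E b)) as [Hb|Hb]; [|exists b; tauto].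
    destruct (omega1_bounded (fun x => x = b \/ Phi b x)) as [b' [Hb' Hlt]].
    - apply enumerable_union; [apply enumerable_eq|exact (HPhi b Hb)].
    - intros x [->|Hx]; [exact (proj1 Hb)|exact (Hbelow b x Hx)].
    - exists b'. intros _. split; [exact Hb'|split; auto]. }
  destruct (choice _ Hnext) as [next Hnext'].
  destruct (classic (exists b, omega1 wlt E b)) as [[g0 Hg0]|Hempty].
  2:{ exfalso. apply not_enumerable_omega1.
      destruct (uncountable_inhabited L_uncountable) as [x0].
      apply (enumerable_sub (fun x => x = x0)); [|apply enumerable_eq].
      intros x Hx. exfalso. eauto. }
  set (chain := fix chain n := match n with O => g0 | S n => next (chain n) end).
  assert (Hchain : forall n, omega1 wlt E (chain n)).
  { induction n as [|n IH]; [exact Hg0|exact (proj1 (Hnext' _ IH))]. }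
  exists chain. split; [exact Hchain|]. intros n. exact (proj2 (Hnext' _ (Hchain n))).
Qed.

(* d is the least point of [omega1 wlt E] above an omega-chain b_0 < b_1 < ... with
   Phi b_n below b_(n+1), so every such point below d lies below some b_n. *)
Lemma omega1_closure_point (Phi : L -> L -> Prop) :
  (forall b, omega1 wlt E b -> enumerable (Phi b)) ->
  (forall b a, Phi b a -> countable_below wlt a) ->
  exists d, omega1 wlt E d /\ forall ys : list L, exists b,
    (forall y, In y ys -> omega1 wlt E y -> wlt y d -> wlt y b) /\ forall a, Phi b a -> wlt a d.
Proof.
  intros HPhi Hbelow.
  destruct (omega1_chain Phi HPhi Hbelow) as [chain [Hchain Hstep]].
  assert (Hmono : forall j k y, j <= k -> wlt y (chain j) -> wlt y (chain k)).
  { intros j k y Hjk. induction Hjk as [|k Hjk IH]; [auto|].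
    intros Hy. exact (slo_trans wslo _ _ _ (IH Hy) (proj1 (Hstep k))). }
  destruct (wlt_wf (fun x => omega1 wlt E x /\ forall n, wlt (chain n) x))
    as [d [[Hd Hdchain] Hdmin]].
  { destruct (omega1_bounded (fun x => exists n, chain n = x)) as [b [Hb Hlt]].
    - apply enumerable_range.
    - intros x [n <-]. exact (proj1 (Hchain n)).
    - exists b. split; [exact Hb|]. intros n. apply Hlt. eauto. }
  exists d. split; [exact Hd|]. intros ys.
  assert (Hys : exists J, forall y, In y ys -> omega1 wlt E y -> wlt y d -> wlt y (chain J)).
  { induction ys as [|y ys [J HJ]]; [exists 0; intros y []|].
    assert (Hy : exists j, omega1 wlt E y -> wlt y d -> wlt y (chain j)).
    { destruct (classic (exists n, ~ wlt (chain n) y)) as [[n Hn]|Hall].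
      - exists (S n). intros _ _. exact (slo_le_lt wslo _ _ _ Hn (proj1 (Hstep n))).
      - exists 0. intros Hy Hyd. exfalso. apply (Hdmin y); [|exact Hyd].
        split; [exact Hy|]. intros n. apply NNPP. intros Hn. apply Hall. eauto. }
    destruct Hy as [j Hj]. exists (Nat.max J j).
    intros z [<-|Hz] Hz1 Hz2.
    - apply (Hmono j); [lia|exact (Hj Hz1 Hz2)].
    - apply (Hmono J); [lia|exact (HJ z Hz Hz1 Hz2)]. }
  destruct Hys as [J HJ]. exists (chain J). split; [exact HJ|].
  intros a Ha. apply (slo_trans wslo _ (chain (S J))); [|exact (Hdchain (S J))].
  exact (proj2 (Hstep J) a Ha).
Qed.

End CountablyManyPredecessors.

(** * Real functions on lines *)

Section StepFunctions.
Local Open Scope R_scope.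

Definition step {T : Type} (lt : T -> T -> Prop) (c t : T) : R :=
  if excluded_middle_informative (lt t c) then 0 else 1.

Lemma Rabs_sub_sub_le (a b c d : R) : Rabs ((a - b) - (c - d)) <= Rabs (a - c) + Rabs (b - d).
Proof.
  replace ((a - b) - (c - d)) with ((a - c) + - (b - d)) by ring.
  rewrite <- (Rabs_Ropp (b - d)). apply Rabs_triang.
Qed.

Lemma Rabs_sub_triang (a b c : R) : Rabs (a - b) <= Rabs (a - c) + Rabs (b - c).
Proof.
  pose proof (Rabs_sub_sub_le a b c c) as H.
  replace (a - b - (c - c)) with (a - b) in H by ring. exact H.
Qed.


Context {T : Type} {lt : T -> T -> Prop} (slo : strict_linear_order T lt).

Lemma step_lt c t : lt t c -> step lt c t = 0.
Proof. intros H. unfold step. destruct excluded_middle_informative; tauto. Qed.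

Lemma step_nlt c t : ~ lt t c -> step lt c t = 1.
Proof. intros H. unfold step. destruct excluded_middle_informative; tauto. Qed.

Lemma incr_cons_lt x l c : incr T lt (x :: l) -> In c l -> lt x c.
Proof.
  revert x. induction l as [|y l IH]; intros x Hincr Hc; [destruct Hc|].
  destruct Hincr as [Hxy Hincr]. destruct Hc as [<-|Hc]; [exact Hxy|].
  exact (slo_trans slo _ _ _ Hxy (IH y Hincr Hc)).
Qed.

Lemma var_sum_sub F1 F2 l :
  var_sum T (fun t => F1 t - F2 t) l <= var_sum T F1 l + var_sum T F2 l.
Proof.
  induction l as [|x [|y l] IH]; simpl; [lra|lra|].
  simpl in IH. pose proof (Rabs_sub_sub_le (F1 y) (F2 y) (F1 x) (F2 x)). lra.
Qed.

Lemma step_range c t : 0 <= step lt c t <= 1.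
Proof. unfold step. destruct excluded_middle_informative; lra. Qed.

Lemma step_le c x y : lt x y -> step lt c x <= step lt c y.
Proof.
  intros Hxy. destruct (classic (lt y c)) as [Hyc|Hyc].
  - assert (Hxc : lt x c) by exact (slo_trans slo _ _ _ Hxy Hyc).
    rewrite (step_lt c x), (step_lt c y) by assumption. lra.
  - rewrite (step_nlt c y) by exact Hyc. apply step_range.
Qed.

Lemma var_sum_step c l : incr T lt l -> var_sum T (step lt c) l <= 1.
Proof.
  assert (Hcons : forall k x, incr T lt (x :: k) ->
                    var_sum T (step lt c) (x :: k) + step lt c x <= 1).
  { intros k. induction k as [|y k IH]; intros x Hincr.
    - simpl. pose proof (step_range c x). lra.
    - destruct Hincr as [Hxy Hincr].
      change (Rabs (step lt c y - step lt c x) + var_sum T (step lt c) (y :: k) + step lt c x <= 1).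
      pose proof (step_le c x y Hxy). pose proof (IH y Hincr).
      rewrite Rabs_pos_eq by lra. lra. }
  destruct l as [|x l]; intros Hincr; [simpl; lra|].
  pose proof (Hcons l x Hincr). pose proof (step_range c x). lra.
Qed.

Lemma right_continuous_step c : right_continuous T lt (step lt c).
Proof.
  intros t eps Heps.
  destruct (classic (exists u, lt t u)) as [[u Htu]|Hmax]; [right|left; eauto].
  destruct (classic (lt t c)) as [Htc|Htc].
  - exists c. split; [exact Htc|]. intros s _ Hsc.
    rewrite (step_lt c s), (step_lt c t) by assumption. rewrite Rminus_diag, Rabs_R0. exact Heps.
  - exists u. split; [exact Htu|]. intros s Hts _.
    assert (Hsc : ~ lt s c) by exact (slo_le_trans slo _ _ _ Htc (slo_asym slo _ _ Hts)).
    rewrite (step_nlt c s), (step_nlt c t) by assumption.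
    rewrite Rminus_diag, Rabs_R0. exact Heps.
Qed.

Lemma right_continuous_sub F1 F2 : right_continuous T lt F1 -> right_continuous T lt F2 ->
  right_continuous T lt (fun t => F1 t - F2 t).
Proof.
  intros H1 H2 t eps Heps.
  destruct (H1 t (eps / 2)) as [Hmax|[u1 [Hu1 Hc1]]]; [lra|left; exact Hmax|].
  destruct (H2 t (eps / 2)) as [Hmax|[u2 [Hu2 Hc2]]]; [lra|left; exact Hmax|].
  right.
  assert (Hu : exists u, lt t u /\ forall s, lt s u -> lt s u1 /\ lt s u2).
  { destruct (slo_total slo u1 u2) as [H12|[<-|H21]].
    - exists u1. split; [exact Hu1|]. intros s Hs.
      split; [exact Hs|exact (slo_trans slo _ _ _ Hs H12)].
    - exists u1. auto.
    - exists u2. split; [exact Hu2|]. intros s Hs.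
      split; [exact (slo_trans slo _ _ _ Hs H21)|exact Hs]. }
  destruct Hu as [u [Htu Hu]]. exists u. split; [exact Htu|]. intros s Hts Hsu.
  destruct (Hu s Hsu) as [Hs1 Hs2].
  pose proof (Rabs_sub_sub_le (F1 s) (F2 s) (F1 t) (F2 t)).
  pose proof (Hc1 s Hts Hs1). pose proof (Hc2 s Hts Hs2). lra.
Qed.

Lemma NBV_step_sub a b : NBV T lt (fun t => step lt a t - step lt b t).
Proof.
  split.
  - apply right_continuous_sub; apply right_continuous_step.
  - exists 2. intros l Hincr.
    pose proof (var_sum_sub (step lt a) (step lt b) l).
    pose proof (var_sum_step a l Hincr). pose proof (var_sum_step b l Hincr). lra.
Qed.

Lemma rs_sum_sub F1 F2 f p :
  rs_sum T (fun t => F1 t - F2 t) f p = rs_sum T F1 f p - rs_sum T F2 f p.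
Proof.
  assert (Htail : forall q,
            rs_tail T (fun t => F1 t - F2 t) f q = rs_tail T F1 f q - rs_tail T F2 f q).
  { induction q as [|x [|y q] IH]; simpl; [ring|ring|]. simpl in IH. rewrite IH. ring. }
  destruct p as [|x p]; cbn [rs_sum]; [ring|]. rewrite Htail. ring.
Qed.

Lemma rs_sum_step c f p : incr T lt p -> In c p -> rs_sum T (step lt c) f p = f c.
Proof.
  assert (Hafter : forall q y, incr T lt (y :: q) -> ~ lt y c ->
                   rs_tail T (step lt c) f (y :: q) = 0).
  { induction q as [|z q IH]; intros y Hincr Hyc; [reflexivity|].
    destruct Hincr as [Hyz Hincr].
    assert (Hzc : ~ lt z c) by (intros Hzc; exact (Hyc (slo_trans slo _ _ _ Hyz Hzc))).
    change (f z * (step lt c z - step lt c y) + rs_tail T (step lt c) f (z :: q) = 0).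
    rewrite IH, (step_nlt c z), (step_nlt c y) by assumption. ring. }
  induction p as [|x p IH]; intros Hincr Hc; [destruct Hc|].
  destruct Hc as [<-|Hc].
  - unfold rs_sum. rewrite Hafter by (exact Hincr || apply (slo_irrefl slo)).
    rewrite step_nlt by apply (slo_irrefl slo). ring.
  - destruct p as [|y p]; [destruct Hc|].
    assert (Hxc : lt x c) by exact (incr_cons_lt x (y :: p) c Hincr Hc).
    destruct Hincr as [Hxy Hincr].
    change (f x * step lt c x +
            (f y * (step lt c y - step lt c x) + rs_tail T (step lt c) f (y :: p)) = f c).
    rewrite <- (IH Hincr Hc). unfold rs_sum. rewrite (step_lt c x) by exact Hxc. ring.
Qed.

Lemma partition_through (bot top a b : T) : (forall y, ~ lt y bot) -> (forall y, ~ lt top y) ->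
  lt a b -> exists p, partition T lt p /\ In a p /\ In b p.
Proof.
  intros Hbot Htop Hab.
  assert (Ha : a = bot \/ lt bot a).
  { destruct (slo_total slo bot a) as [H|[H|H]]; [auto|auto|exfalso; exact (Hbot a H)]. }
  assert (Hb : b = top \/ lt b top).
  { destruct (slo_total slo b top) as [H|[H|H]]; [auto|auto|exfalso; exact (Htop b H)]. }
  destruct Ha as [->|Ha], Hb as [->|Hb];
    [exists [bot; top] | exists [bot; b; top] | exists [bot; a; top] | exists [bot; a; b; top]];
    (split; [split; [simpl; tauto|simpl; split; assumption]|simpl; tauto]).
Qed.

Lemma stieltjes_step_sub (bot top : T) a b f : (forall y, ~ lt y bot) -> (forall y, ~ lt top y) ->
  lt a b -> stieltjes T lt (fun t => step lt a t - step lt b t) f (f a - f b).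
Proof.
  intros Hbot Htop Hab eps Heps.
  destruct (partition_through bot top a b Hbot Htop Hab) as [p0 [Hp0 [Ha Hb]]].
  exists p0. split; [exact Hp0|]. intros p [Hincr _] Hsub.
  rewrite rs_sum_sub, (rs_sum_step a), (rs_sum_step b) by auto.
  rewrite Rminus_diag, Rabs_R0. exact Heps.
Qed.

End StepFunctions.

Lemma oscillation_cover {T : Type} {lt : T -> T -> Prop} (f : T -> R) (eps : R) :
  order_compact T lt -> continuous_fun T lt f -> (0 < eps)%R ->
  exists ps : list (option T * option T),
    (forall x, exists p, In p ps /\ in_int T lt (fst p) (snd p) x) /\
    forall p x y, In p ps -> in_int T lt (fst p) (snd p) x -> in_int T lt (fst p) (snd p) y ->
      (Rabs (f x - f y) < eps)%R.
Proof.
  intros Hcomp Hf Heps.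
  destruct (choice (fun z (p : option T * option T) => in_int T lt (fst p) (snd p) z /\
             forall y, in_int T lt (fst p) (snd p) y -> (Rabs (f y - f z) < eps / 2)%R))
    as [nb Hnb].
  { intros z. destruct (Hf z (eps / 2)%R) as [lo [hi H]]; [lra|]. exists (lo, hi). exact H. }
  destruct (Hcomp T (fun z => in_int T lt (fst (nb z)) (snd (nb z)))) as [zs Hzs].
  { intros z x Hx. exists (fst (nb z)), (snd (nb z)). auto. }
  { intros z. exists z. apply Hnb. }
  exists (map nb zs). split.
  - intros x. destruct (Hzs x) as [z [Hz Hx]]. exists (nb z). split; [apply in_map|]; assumption.
  - intros p x y Hp Hx Hy. apply in_map_iff in Hp. destruct Hp as [z [<- _]].
    destruct (Hnb z) as [_ Hclose]. pose proof (Hclose x Hx). pose proof (Hclose y Hy).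
    pose proof (Rabs_sub_triang (f x) (f y) (f z)). lra.
Qed.

Lemma fold_right_Rplus_ge {X : Type} (g : X -> R) (c : R) (l : list X) :
  (forall x, In x l -> (c <= g x)%R) -> (INR (length l) * c <= fold_right Rplus 0 (map g l))%R.
Proof.
  induction l as [|x l IH]; intros Hl; cbn [length map fold_right]; [simpl; lra|].
  pose proof (IH (fun y Hy => Hl y (or_intror Hy))). pose proof (Hl x (or_introl eq_refl)).
  rewrite S_INR. lra.
Qed.

(** * The counterexample *)

Section Counterexample.
Context {L : Type} {ltL : L -> L -> Prop} (sloL : strict_linear_order L ltL).
Hypothesis L_complete : complete ltL.
Variables (m M : L).
Hypotheses (m_min : forall x, ~ ltL x m) (M_max : forall x, ~ ltL M x) (m_lt_M : ltL m M).
Local Open Scope nat_scope.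
Local Notation K := (nat -> L).

Let K_slo : strict_linear_order K (lex ltL) := lex_strict_linear_order sloL.
Let K_complete : complete (lex ltL) := lex_complete L_complete.
Let K_compact : order_compact K (lex ltL) := complete_compact K_slo K_complete.

Definition prefix_of (s : list L) (t : K) : Prop := forall i, i < length s -> t i = nth i s m.

Definition cyl_min (s : list L) : K := fun i => nth i s m.
Definition cyl_max (s : list L) : K := fun i => nth i s M.

Definition initial_segment (t : K) (k : nat) : list L := map t (seq 0 k).

Lemma prefix_of_cyl_min s : prefix_of s (cyl_min s).
Proof. intros i _. reflexivity. Qed.

Lemma prefix_of_cyl_max s : prefix_of s (cyl_max s).
Proof. intros i Hi. apply nth_indep. exact Hi. Qed.

Lemma prefix_of_agree s t u : prefix_of s t -> prefix_of s u -> agree (length s) t u.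
Proof. intros Ht Hu i Hi. rewrite Ht, Hu by exact Hi. reflexivity. Qed.

Lemma cyl_min_lt_max s : lex ltL (cyl_min s) (cyl_max s).
Proof.
  exists (length s).
  split; [apply prefix_of_agree; [apply prefix_of_cyl_min|apply prefix_of_cyl_max]|].
  unfold cyl_min, cyl_max. rewrite !nth_overflow by lia. exact m_lt_M.
Qed.

Lemma cyl_min_le s t : prefix_of s t -> ~ lex ltL t (cyl_min s).
Proof.
  intros Ht [n [_ Hn]]. unfold cyl_min in Hn.
  destruct (Nat.lt_ge_cases n (length s)) as [Hlt|Hge].
  - rewrite Ht in Hn by exact Hlt. exact (slo_irrefl sloL _ Hn).
  - rewrite nth_overflow in Hn by exact Hge. exact (m_min _ Hn).
Qed.

Lemma lt_cyl_max s t : prefix_of s t -> t (length s) <> M -> lex ltL t (cyl_max s).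
Proof.
  intros Ht HM. exists (length s).
  split; [apply prefix_of_agree; [exact Ht|apply prefix_of_cyl_max]|].
  unfold cyl_max. rewrite nth_overflow by lia.
  destruct (slo_total sloL (t (length s)) M) as [H|[H|H]]; [exact H|contradiction|].
  exfalso. exact (M_max _ H).
Qed.

Lemma prefix_of_between s t : ~ lex ltL t (cyl_min s) -> ~ lex ltL (cyl_max s) t -> prefix_of s t.
Proof.
  intros Hmin Hmax i Hi.
  assert (Hagree : agree (length s) (cyl_min s) t).
  { apply (agree_between sloL _ _ _ (cyl_max s) Hmin Hmax).
    apply prefix_of_agree; [apply prefix_of_cyl_min|apply prefix_of_cyl_max]. }
  rewrite <- (Hagree i Hi). reflexivity.
Qed.

Lemma length_initial_segment t k : length (initial_segment t k) = k.
Proof. unfold initial_segment. rewrite length_map, length_seq. reflexivity. Qed.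

Lemma prefix_of_initial_segment t k : prefix_of (initial_segment t k) t.
Proof.
  intros i Hi. rewrite length_initial_segment in Hi. unfold initial_segment.
  rewrite (nth_indep _ m (t 0)) by (rewrite length_map, length_seq; exact Hi).
  rewrite map_nth, seq_nth by exact Hi. reflexivity.
Qed.

Lemma prefix_of_eq_initial_segment s t : prefix_of s t -> s = initial_segment t (length s).
Proof.
  intros Ht. apply (nth_ext _ _ m m); [rewrite length_initial_segment; reflexivity|].
  intros i Hi.
  rewrite <- (prefix_of_initial_segment t (length s)) by (rewrite length_initial_segment; exact Hi).
  symmetry. exact (Ht i Hi).
Qed.

Local Open Scope R_scope.

Definition cyl_fun (s : list L) (t : K) : R :=
  step (lex ltL) (cyl_min s) t - step (lex ltL) (cyl_max s) t.

Lemma cyl_fun_NBV s : NBV K (lex ltL) (cyl_fun s).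
Proof. exact (NBV_step_sub K_slo (cyl_min s) (cyl_max s)). Qed.

Lemma cyl_fun_stieltjes s f :
  stieltjes K (lex ltL) (cyl_fun s) f (f (cyl_min s) - f (cyl_max s)).
Proof.
  apply (stieltjes_step_sub K_slo (fun _ => m) (fun _ => M)).
  - intros y [n [_ Hn]]. exact (m_min _ Hn).
  - intros y [n [_ Hn]]. exact (M_max _ Hn).
  - apply cyl_min_lt_max.
Qed.

Lemma cyl_fun_eq1 s t : prefix_of s t -> t (length s) <> M -> cyl_fun s t = 1.
Proof.
  intros Ht HM. unfold cyl_fun.
  rewrite step_nlt by exact (cyl_min_le s t Ht).
  rewrite step_lt by exact (lt_cyl_max s t Ht HM). ring.
Qed.

Lemma continuous_agree f h eps : continuous_fun K (lex ltL) f -> 0 < eps ->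
  exists N, forall t, agree N t h -> Rabs (f t - f h) < eps.
Proof.
  intros Hf Heps. destruct (Hf h eps Heps) as [lo [hi [Hh Hclose]]].
  destruct (in_int_agree lo hi h Hh) as [N HN].
  exists N. intros t Ht. exact (Hclose t (HN t Ht)).
Qed.

Lemma large_oscillation_prefixes f h eps : continuous_fun K (lex ltL) f -> 0 < eps ->
  exists ss, forall s, eps <= Rabs (f (cyl_min s) - f (cyl_max s)) -> prefix_of s h -> In s ss.
Proof.
  intros Hf Heps. destruct (continuous_agree f h (eps / 2) Hf) as [N HN]; [lra|].
  exists (map (initial_segment h) (seq 0 N)). intros s Hs Hsh.
  destruct (Nat.lt_ge_cases (length s) N) as [Hlt|Hge].
  - apply in_map_iff. exists (length s).
    split; [symmetry; exact (prefix_of_eq_initial_segment s h Hsh)|apply in_seq; lia].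
  - exfalso.
    assert (Hnear : forall t, prefix_of s t -> Rabs (f t - f h) < eps / 2).
    { intros t Ht. apply HN. apply (agree_le (length s)); [exact Hge|].
      exact (prefix_of_agree s t h Ht Hsh). }
    pose proof (Hnear _ (prefix_of_cyl_min s)). pose proof (Hnear _ (prefix_of_cyl_max s)).
    pose proof (Rabs_sub_triang (f (cyl_min s)) (f (cyl_max s)) (f h)). lra.
Qed.

Lemma large_oscillation_interval_end f eps (ps : list (option K * option K)) s :
  (forall p x y, In p ps -> in_int K (lex ltL) (fst p) (snd p) x ->
     in_int K (lex ltL) (fst p) (snd p) y -> Rabs (f x - f y) < eps) ->
  forall lo hi, In (lo, hi) ps -> in_int K (lex ltL) lo hi (cyl_min s) ->
  eps <= Rabs (f (cyl_min s) - f (cyl_max s)) -> exists h, hi = Some h /\ prefix_of s h.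
Proof.
  intros Hclose lo hi Hp [Hlo Hhi] Hs.
  assert (Hout : ~ in_int K (lex ltL) lo hi (cyl_max s)).
  { intros Hin. pose proof (Hclose (lo, hi) _ _ Hp (conj Hlo Hhi) Hin). simpl in *. lra. }
  assert (Hlo' : match lo with None => True | Some a => lex ltL a (cyl_max s) end).
  { destruct lo as [a|]; [exact (slo_trans K_slo _ _ _ Hlo (cyl_min_lt_max s))|exact I]. }
  destruct hi as [h|]; [|exfalso; exact (Hout (conj Hlo' I))].
  exists h. split; [reflexivity|].
  apply prefix_of_between; [exact (slo_asym K_slo _ _ Hhi)|].
  intros Hmaxh. exact (Hout (conj Hlo' Hmaxh)).
Qed.

Lemma cyl_oscillation_c0 f : continuous_fun K (lex ltL) f ->
  c0lim (fun s => f (cyl_min s) - f (cyl_max s)).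
Proof.
  intros Hf eps Heps.
  destruct (oscillation_cover f eps K_compact Hf Heps) as [ps [Hcover Hclose]].
  destruct (choice _ (fun h => large_oscillation_prefixes f h eps Hf Heps)) as [ss Hss].
  exists (flat_map (fun p : option K * option K =>
                      match snd p with Some h => ss h | None => [] end) ps).
  intros s Hs. destruct (Hcover (cyl_min s)) as [[lo hi] [Hp Hin]].
  destruct (large_oscillation_interval_end f eps ps s Hclose lo hi Hp Hin Hs) as [h [-> Hsh]].
  apply in_flat_map. exists (lo, Some h). split; [exact Hp|exact (Hss h s Hs Hsh)].
Qed.

Lemma cyl_fun_weak_star_null : weak_star_null (lex ltL) cyl_fun.
Proof.
  intros f Hf. exists (fun s => f (cyl_min s) - f (cyl_max s)). split.
  - intros s. apply cyl_fun_stieltjes.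
  - exact (cyl_oscillation_c0 f Hf).
Qed.

Lemma dense_agree (H D : K -> Prop) t k : order_closed K (lex ltL) H ->
  (forall x, H x -> forall lo hi, in_int K (lex ltL) lo hi x ->
     exists d, D d /\ in_int K (lex ltL) lo hi d) ->
  H t -> ~ right_isolated K (lex ltL) H t -> (forall i, t i <> M) ->
  exists d, D d /\ agree k d t.
Proof.
  intros HC Hdense Ht Hni HM.
  set (s := initial_segment t k).
  assert (Hts : prefix_of s t) by apply prefix_of_initial_segment.
  assert (Htmax : lex ltL t (cyl_max s)) by exact (lt_cyl_max s t Hts (HM _)).
  destruct (not_right_isolated_approach K_slo H t (cyl_max s) K_complete HC Ht Hni Htmax)
    as [u [Hu [Htu Humax]]].
  destruct (Hdense u Hu (Some t) (Some (cyl_max s)) (conj Htu Humax)) as [d [Dd [Htd Hdmax]]].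
  exists d. split; [exact Dd|].
  rewrite <- (length_initial_segment t k). apply (prefix_of_agree s d t); [|exact Hts].
  apply prefix_of_between; [|exact (slo_asym K_slo _ _ Hdmax)].
  intros Hdmin. exact (cyl_min_le s t Hts (slo_trans K_slo _ _ _ Htd Hdmin)).
Qed.

Variable wlt : L -> L -> Prop.
Hypothesis wslo : strict_linear_order L wlt.
Hypothesis wlt_wf :
  forall P : L -> Prop, (exists x, P x) -> exists z, P z /\ forall x, P x -> ~ wlt x z.
Hypothesis L_uncountable : uncountable L.

Let endpoints (y : L) : Prop := y = m \/ y = M.
Let endpoints_enumerable : enumerable endpoints :=
  enumerable_union _ _ (enumerable_eq m) (enumerable_eq M).

(* The values of q a: the predecessors of a with M removed, so that q a lies strictly below
   the right end of every cylinder containing it, and with m added, so that q a exists. *)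
Definition listed (a y : L) : Prop := (wlt y a /\ y <> M) \/ y = m.

Lemma exists_enumeration a : exists e : K, countable_below wlt a ->
  (forall k, listed a (e k)) /\ forall y, listed a y -> exists k, e k = y.
Proof.
  destruct (classic (countable_below wlt a)) as [Ha|Ha]; [|exists (fun _ => m); tauto].
  destruct (enumerable_union _ _ Ha (enumerable_eq m)) as [f Hf].
  exists (fun k => if excluded_middle_informative (listed a (f k)) then f k else m).
  intros _. split.
  - intros k. destruct excluded_middle_informative as [H|_]; [exact H|right; reflexivity].
  - intros y Hy. destruct (Hf y) as [k <-]; [unfold listed in Hy; tauto|].
    exists k. destruct excluded_middle_informative; tauto.
Qed.

Section Enumeration.
Variable q : L -> K.
Hypothesis q_spec : forall a, countable_below wlt a ->
  (forall k, listed a (q a k)) /\ forall y, listed a y -> exists k, q a k = y.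

Local Notation W := (omega1 wlt endpoints).

Definition Qset (t : K) : Prop := exists a, W a /\ t = q a.

Lemma q_not_M a k : W a -> q a k <> M.
Proof.
  intros [Ha _]. destruct (proj1 (q_spec a Ha) k) as [[_ HM]| ->]; [exact HM|].
  intros Heq. rewrite Heq in m_lt_M. exact (slo_irrefl sloL M m_lt_M).
Qed.

Lemma q_injective a b : W a -> W b -> q a = q b -> a = b.
Proof.
  assert (Hnlt : forall a b, W a -> W b -> q a = q b -> ~ wlt a b).
  { intros x y [Hx Hxend] [Hy _] Hq Hxy.
    destruct (proj2 (q_spec y Hy) x) as [k Hk].
    { left. split; [exact Hxy|]. intros ->. apply Hxend. right. reflexivity. }
    rewrite <- Hq in Hk. destruct (proj1 (q_spec x Hx) k) as [[Hlt _]|Hm]; rewrite Hk in *.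
    - exact (slo_irrefl wslo _ Hlt).
    - apply Hxend. left. exact Hm. }
  intros Ha Hb Hq. destruct (slo_total wslo a b) as [H|[H|H]]; [exfalso|exact H|exfalso].
  - exact (Hnlt a b Ha Hb Hq H).
  - exact (Hnlt b a Hb Ha (eq_sym Hq) H).
Qed.

Lemma enumerable_q_preimage (l : list K) : enumerable (fun a => W a /\ In (q a) l).
Proof.
  apply (enumerable_sub (fun a => exists t, In t l /\ (W a /\ q a = t))).
  { intros a [Ha Hin]. exists (q a). auto. }
  apply (enumerable_bigunion m); [exact (enumerable_in_list (fun _ => m) l)|].
  intros t _. destruct (classic (exists a, W a /\ q a = t)) as [[a [Ha <-]]|Hnone].
  - apply (enumerable_sub (fun b => b = a)); [|apply enumerable_eq].
    intros b [Hb Hq]. exact (q_injective b a Hb Ha Hq).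
  - apply (enumerable_sub (fun b => b = m)); [|apply enumerable_eq].
    intros b Hb. exfalso. eauto.
Qed.

Definition captured_below (h : K -> nat) (b a : L) : Prop :=
  W a /\ exists s, (forall y, In y s -> wlt y b \/ y = m) /\
    (h (q a) <= length s)%nat /\ prefix_of s (q a).

Lemma enumerable_captured_below (h : K -> nat) b :
  (forall s, exists l, forall t, Qset t /\ (h t <= length s)%nat /\ prefix_of s t -> In t l) ->
  W b -> enumerable (captured_below h b).
Proof.
  intros Hfin Hb. destruct (choice _ Hfin) as [fin Hfin'].
  apply (enumerable_sub (fun a => exists s, (forall y, In y s -> wlt y b \/ y = m) /\
                                            (W a /\ In (q a) (fin s)))).
  - intros a [Ha [s [Hs Hsa]]]. exists s. split; [exact Hs|split; [exact Ha|]].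
    apply Hfin'. split; [exists a; auto|exact Hsa].
  - apply (enumerable_bigunion m).
    + apply enumerable_lists. apply enumerable_union; [exact (proj1 Hb)|apply enumerable_eq].
    + intros s _. apply enumerable_q_preimage.
Qed.

Lemma Qset_many_on_a_cylinder (h : K -> nat) (N : nat) : exists s l,
  NoDup l /\ length l = N /\ forall t, In t l -> Qset t /\ (h t <= length s)%nat /\ prefix_of s t.
Proof.
  apply NNPP. intros Hno.
  assert (Hfin : forall s, exists l, forall t,
            Qset t /\ (h t <= length s)%nat /\ prefix_of s t -> In t l).
  { intros s.
    destruct (finite_or_many (fun t => Qset t /\ (h t <= length s)%nat /\ prefix_of s t) N)
      as [[l Hl]|Hl]; [exfalso; apply Hno; exists s, l; tauto|exact Hl]. }
  (* Otherwise every cylinder holds finitely many such points; at a closure point d the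
     prefix of q d of length h (q d) captures d below some b, so d < d. *)
  destruct (omega1_closure_point wslo wlt_wf L_uncountable endpoints endpoints_enumerable
              (captured_below h)) as [d [Hd Hclosed]].
  - intros b Hb. exact (enumerable_captured_below h b Hfin Hb).
  - intros b a [[Ha _] _]. exact Ha.
  - set (s := initial_segment (q d) (h (q d))).
    destruct (Hclosed s) as [b [Hb Hd_after_b]].
    apply (slo_irrefl wslo d). apply Hd_after_b. split; [exact Hd|].
    assert (Hlen : (h (q d) <= length s)%nat) by (unfold s; rewrite length_initial_segment; lia).
    exists s. split; [|exact (conj Hlen (prefix_of_initial_segment _ _))].
    intros y Hy.
    assert (Hlisted : listed d y).
    { unfold s, initial_segment in Hy. apply in_map_iff in Hy. destruct Hy as [i [<- _]].
      exact (proj1 (q_spec d (proj1 Hd)) i). }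
    destruct Hlisted as [[Hlt HM]|Hm]; [|right; exact Hm].
    destruct (classic (y = m)) as [Hm|Hm]; [right; exact Hm|left].
    apply (Hb y Hy); [|exact Hlt].
    split; [exact (countable_below_lt wslo _ _ (proj1 Hd) Hlt)|unfold endpoints; tauto].
Qed.

Lemma not_type_c0l1 : ~ type_c0l1 cyl_fun Qset.
Proof.
  intros [a [b [Hsum [Ha [B HB]]]]].
  assert (Hbig : forall t, exists big : list (list L),
            Qset t -> forall s, / 2 <= Rabs (a s t) -> In s big).
  { intros t. destruct (classic (Qset t)) as [Qt|Qt]; [|exists []; tauto].
    destruct (Ha t Qt (/ 2)) as [big Hbig]; [lra|]. exists big. auto. }
  destruct (choice _ Hbig) as [big Hbig'].
  set (h := fun t => S (list_max (map (@length L) (big t)))).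
  destruct (INR_unbounded (2 * B)) as [N HN].
  destruct (Qset_many_on_a_cylinder h N) as [s [l [Hnd [Hlen Hl]]]].
  assert (Hb : forall t, In t l -> / 2 <= Rabs (b s t)).
  { intros t Ht. destruct (Hl t Ht) as [Qt [Hh Hst]].
    assert (Has : Rabs (a s t) < / 2).
    { apply Rnot_le_lt. intros Hle.
      assert (Hmax : (length s <= list_max (map (@length L) (big t)))%nat).
      { apply (proj1 (Forall_forall _ _) (proj1 (list_max_le _ _) (le_n _))).
        apply in_map. exact (Hbig' t Qt s Hle). }
      unfold h in Hh. lia. }
    assert (Hone : cyl_fun s t = 1).
    { apply cyl_fun_eq1; [exact Hst|]. destruct Qt as [a' [Ha' ->]]. exact (q_not_M a' _ Ha'). }
    pose proof (Hsum s t Qt) as Hst'. rewrite Hone in Hst'.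
    pose proof (Rabs_triang_inv 1 (a s t)). rewrite Rabs_R1 in *.
    replace (b s t) with (1 - a s t) by lra. lra. }
  pose proof (HB s l Hnd (fun t Ht => proj1 (Hl t Ht))).
  pose proof (fold_right_Rplus_ge (fun t => Rabs (b s t)) (/ 2) l Hb). rewrite Hlen in *. lra.
Qed.

Lemma Qset_separable_countable (H : K -> Prop) :
  order_closed K (lex ltL) H -> separable_set K (lex ltL) H ->
  countable_set K (fun t => Qset t /\ H t /\ ~ right_isolated K (lex ltL) H t).
Proof.
  intros HC [D [_ [HD Hdense]]].
  apply enumerable_countable.
  set (coords := fun y => exists d, D d /\ exists k, d k = y).
  assert (Hcoords : enumerable coords).
  { apply (enumerable_bigunion m D (fun d y => exists k, d k = y)).
    - exact (countable_enumerable (fun _ => m) D HD).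
    - intros d _. apply enumerable_range. }
  destruct (omega1_bounded wslo wlt_wf L_uncountable endpoints endpoints_enumerable
              (fun y => coords y /\ W y))
    as [e [He Hlt]].
  - apply (enumerable_sub coords); [tauto|exact Hcoords].
  - intros y [_ Hy]. exact (proj1 Hy).
  - apply (enumerable_sub (fun t => exists a, (wlt a e \/ a = e) /\ t = q a)).
    + intros t [[a [Ha ->]] [Ht Hni]]. exists a. split; [|reflexivity].
      destruct (slo_total wslo a e) as [Hae|[Hae|Hea]]; [left; exact Hae|right; exact Hae|].
      exfalso.
      destruct (proj2 (q_spec a (proj1 Ha)) e) as [k Hk].
      { left. split; [exact Hea|]. intros HeM. apply (proj2 He). right. exact HeM. }
      destruct (dense_agree H D (q a) (S k) HC Hdense Ht Hni (fun i => q_not_M a i Ha))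
        as [d [Dd Hd]].
      apply (slo_irrefl wslo e). apply Hlt. split; [|exact He].
      exists d. split; [exact Dd|]. exists k. rewrite Hd by lia. exact Hk.
    + apply enumerable_image. apply enumerable_union; [exact (proj1 He)|apply enumerable_eq].
Qed.

Lemma not_separably_determined_of_enumeration : ~ separably_determined K (lex ltL).
Proof.
  intros Hsd. apply not_type_c0l1. apply Hsd.
  - exact cyl_fun_NBV.
  - exact cyl_fun_weak_star_null.
  - intros H HC Hsep. destruct (Qset_separable_countable H HC Hsep) as [g Hg].
    exists g. intros x y Hx Hy. apply Hg; tauto.
Qed.

End Enumeration.

Lemma not_separably_determined : ~ separably_determined K (lex ltL).
Proof.
  destruct (choice _ exists_enumeration) as [q Hq].
  exact (not_separably_determined_of_enumeration q Hq).
Qed.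

End Counterexample.

Theorem theorem4p6 (L : Type) (ltL : L -> L -> Prop) :
  compact_line L ltL -> uncountable L ->
  ~ separably_determined (nat -> L) (lex ltL).
Proof.
  intros [sloL Hcomp] Hunc.
  destruct (uncountable_inhabited Hunc) as [x0].
  pose proof (compact_complete sloL x0 Hcomp) as Hcomplete.
  destruct (Hcomplete (fun _ => False)) as [m [_ Hm]].
  destruct (Hcomplete (fun _ => True)) as [M [HM _]].
  assert (m_min : forall x, ~ ltL x m) by (intros x; apply Hm; intros y []).
  assert (M_max : forall x, ~ ltL M x) by (intros x; apply HM; exact I).
  destruct (exists_well_order L) as [wlt [wslo wlt_wf]].
  exact (not_separably_determined sloL Hcomplete m M m_min M_max
           (uncountable_min_lt_max sloL m M Hunc m_min M_max) wlt wslo wlt_wf Hunc).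
Qed.
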